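(* Let $T_2$ be the tree with vertices $w,x,y,z,u_1,a_1,b_1$ and edges $wx,xy,yz,zu_1,u_1a_1,u_1b_1$, and let $T_3$ be the tree obtained from $T_2$ by adding vertices $u_2,a_2,b_2$ and edges $zu_2,u_2a_2,u_2b_2$. Let $v$ be a vertex of $T_2$, $S$ a $\Delta_S$-star with $\Delta_S\ge 3$, and $G=T_2\rhd_v S$ a graph of order $n$ and maximum degree $\Delta\ge 3$ with $G\not\cong T_3$. Then $\gamma^{\rm ID}(G)\le \left(\frac{\Delta-1}{\Delta}\right)n$.
   Context: An identifying code of a graph $G$ is a set $C\subseteq V(G)$ such that every vertex $v$ has $N[v]\cap C\neq\emptyset$ and for all distinct $u,v$, $N[u]\cap C \ne N[v]\cap C$, where $N[v]$ is the closed neighborhood; $\gamma^{\rm ID}(G)$ is its minimum size. A $k$-star is $K_{1,k}$. For a graph $G'$, a vertex $v$ of $G'$ and a star $S$, $G'\rhd_v S$ is the graph obtained from the disjoint union of $G'$ and $S$ by identifying $v$ with a leaf of $S$. *)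

From mathcomp Require Import all_boot all_order all_algebra.
Set Implicit Arguments. Unset Strict Implicit. Unset Printing Implicit Defensive.

Section Graphs.
Variable V : finType.
Implicit Types (e : rel V).

Definition simple_graph e := symmetric e /\ irreflexive e.

Definition nbhd e (x : V) : {set V} := [set y | e x y].
Definition cnbhd e (x : V) : {set V} := x |: nbhd e x.

Definition degree e (x : V) : nat := #|nbhd e x|.
Definition max_degree e : nat := \max_(x : V) degree e x.

Definition is_id_code e (C : {set V}) : bool :=
  [forall x, cnbhd e x :&: C != set0] &&
  [forall x, forall y, (x != y) ==> (cnbhd e x :&: C != cnbhd e y :&: C)].

(* gamma^ID: minimum size of an identifying code (|V|+1 if none exists) *)
Definition gammaID e : nat :=
  \big[minn/#|V|.+1]_(C : {set V} | is_id_code e C) #|C|.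
End Graphs.

Definition graph_iso (V1 V2 : finType) (e1 : rel V1) (e2 : rel V2) : Prop :=
  exists f : V1 -> V2, bijective f /\ forall a b, e2 (f a) (f b) = e1 a b.

(* G' |>_v S where S = K_{1,k}: vertex set V + 'I_k; inr 0 is the centre of
   the star, inr i (0 < i < k) are the other k-1 leaves, and the remaining
   leaf of S is identified with v. *)
Definition attach_star (V : finType) (e : rel V) (v : V) (k : nat)
  : rel (V + 'I_k)%type :=
  fun a b =>
    match a, b with
    | inl x, inl y => e x y
    | inl x, inr i => (x == v) && (val i == 0)
    | inr i, inl x => (x == v) && (val i == 0)
    | inr i, inr j => ((val i == 0) && (val j != 0)) || ((val j == 0) && (val i != 0))
    end.

Definition edge_rel (n : nat) (E : seq (nat * nat)) : rel 'I_n :=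
  fun a b => ((val a, val b) \in E) || ((val b, val a) \in E).

(* T2: w=0, x=1, y=2, z=3, u1=4, a1=5, b1=6 *)
Definition T2_edges : seq (nat * nat) :=
  [:: (0,1); (1,2); (2,3); (3,4); (4,5); (4,6)].
Definition T2 : rel 'I_7 := @edge_rel 7 T2_edges.

(* T3: T2 plus u2=7, a2=8, b2=9 with edges z u2, u2 a2, u2 b2 *)
Definition T3 : rel 'I_10 :=
  @edge_rel 10 (T2_edges ++ [:: (3,7); (7,8); (7,9)]).

Arguments attach_star {V} e v k.
Arguments edge_rel n E.

From mathcomp Require Import all_boot all_order all_algebra.
From mathcomp Require Import zify.
Import Order.TTheory GRing.Theory Num.Theory.
Set Implicit Arguments. Unset Strict Implicit. Unset Printing Implicit Defensive.

(* Let D be a set of four vertices of T2 that dominates T2 and separates every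
   pair of vertices other than v.  Then D, the centre of S and all leaves of S
   but one form an identifying code of G = T2 |>_v S: the centre dominates the
   star and separates v from the rest of T2, and the leaves in the code separate
   the leaves from each other and from the centre.  Such a D exists for every v
   and contains v unless v = z; for v = z the centre is separated from a leaf by
   a second leaf instead, which needs Delta_S >= 4, and Delta_S = 3 gives T3.
   Hence gamma^ID(G) <= Delta_S + 3 while n = Delta_S + 7 and
   Delta >= Delta_S >= 3, so that (Delta_S + 3) Delta <= (Delta - 1) n. *)

Section IdentifyingCodes.
Variables (T : finType) (e : rel T).
Implicit Types (C : {set T}) (x y : T).

Lemma in_cnbhd x y : (y \in cnbhd e x) = (y == x) || e x y.
Proof. by rewrite !inE. Qed.

Definition dominates C := forall x, exists2 c, c \in C & c \in cnbhd e x.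

Definition separates C x y :=
  exists2 c, c \in C & (c \in cnbhd e x) != (c \in cnbhd e y).

Lemma separates_sym C x y : separates C x y -> separates C y x.
Proof. by case=> c cC sep_c; exists c; rewrite // eq_sym. Qed.

Lemma is_id_code_sep C :
  dominates C -> (forall x y, x != y -> separates C x y) -> is_id_code e C.
Proof.
move=> dom sep; apply/andP; split.
  apply/forallP=> x; have [c cC cx] := dom x.
  by apply/set0Pn; exists c; rewrite inE cx.
apply/forallP=> x; apply/forallP=> y; apply/implyP=> /sep[c cC].
by apply: contraNneq => /setP/(_ c); rewrite !inE cC !andbT => ->.
Qed.

Lemma gammaID_le C : is_id_code e C -> (gammaID e <= #|C|)%N.
Proof. exact: (@bigmin_le_cond _ nat {set T} #|T|.+1 C (is_id_code e)). Qed.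

End IdentifyingCodes.

Section AttachStar.
Variables (V : finType) (k : nat).

(* The leaf [inr 1] can be left out: it is the only vertex whose neighbourhood
   meets the code in the centre alone. *)
Definition star_code (D : {set V}) : {set V + 'I_k} :=
  [set x | match x with inl a => a \in D | inr i => val i != 1%N end].

Lemma card_star_code D : (1 < k)%N -> (#|star_code D| <= #|D| + k.-1)%N.
Proof.
move=> k_gt1; pose l1 : 'I_k := Ordinal k_gt1.
have -> : star_code D = inl @: D :|: inr @: [set~ l1].
  apply/setP=> -[a|i]; rewrite !inE ?(mem_imset _ _ inl_inj) ?(mem_imset _ _ inr_inj).
    by case: imsetP => [[]|]; rewrite ?orbF.
  by case: imsetP => [[]|]; rewrite // !inE -val_eqE.
rewrite (leq_trans (leq_card_setU _ _)) // !card_imset ?cardsC1 ?card_ord //.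
- exact: inr_inj.
- exact: inl_inj.
Qed.

Lemma max_degree_attach_star (e : rel V) v :
  (0 < k)%N -> (k <= max_degree (attach_star e v k))%N.
Proof.
move=> k_gt0; pose c : 'I_k := Ordinal k_gt0.
apply: leq_trans (leq_bigmax (inr c)); rewrite /degree.
have -> : nbhd (attach_star e v k) (inr c) = inl v |: inr @: [set~ c].
  apply/setP=> -[a|i]; rewrite !inE ?(mem_imset _ _ inr_inj) /=.
    by case: imsetP => [[]|]; rewrite ?orbF andbT.
  by rewrite !inE andbF orbF -val_eqE.
rewrite cardsU1 card_imset; last exact: inr_inj.
have -> : inl v \notin inr @: [set~ c] by apply/imsetP=> -[].
by rewrite cardsC1 card_ord add1n prednK.
Qed.

Section StarCode.
Variables (e : rel V) (v : V) (D : {set V}).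
Hypothesis k_gt2 : (2 < k)%N.
Hypothesis D_dom : dominates e D.
Hypothesis D_sep : forall x y, x != v -> y != v -> x != y -> separates e D x y.
(* Separates the centre from a leaf [inr j], j >= 2: by [inl v], or by a leaf
   of the code other than [inr j]. *)
Hypothesis D_centre : (v \in D) || (3 < k).

Local Notation G := (attach_star e v k).
Local Notation C := (star_code D).

Let centre : 'I_k := Ordinal (ltnW (ltnW k_gt2)).
Let leaf2 : 'I_k := Ordinal k_gt2.

Lemma in_cnbhd_inl x y : (inl y \in cnbhd G (inl x)) = (y \in cnbhd e x).
Proof. by rewrite !in_cnbhd. Qed.

Lemma dominates_star_code : dominates G C.
Proof.
case=> [x|i]; last by exists (inr centre); rewrite !inE //=; case: i => -[|j].
have [d dD dx] := D_dom x; exists (inl d); [by rewrite inE | by rewrite in_cnbhd_inl].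
Qed.

Lemma separates_inl_inl x y : x != y -> separates G C (inl x) (inl y).
Proof.
wlog xv : x y / x != v => [wlog_xv xy|xy].
  have [vx|xv] := eqVneq x v; last exact: wlog_xv.
  by apply/separates_sym/wlog_xv; rewrite eq_sym // -vx.
have [->|yv] := eqVneq y v.
  by exists (inr centre); rewrite !inE ?in_cnbhd //= (negbTE xv) !eqxx.
have [d dD dsep] := D_sep xv yv xy.
by exists (inl d); [rewrite inE | rewrite !in_cnbhd_inl].
Qed.

Lemma separates_inl_inr x i : separates G C (inl x) (inr i).
Proof.
have [->|xv] := eqVneq x v; last first.
  by exists (inr centre); rewrite !inE ?in_cnbhd //= (negbTE xv); case: i => -[|j].
case: i => -[|[|j]] lt_ik.
- by exists (inr leaf2); rewrite !inE ?in_cnbhd //= eqxx.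
- have [d dD dv] := D_dom v; exists (inl d); first by rewrite inE.
  by rewrite in_cnbhd_inl dv in_cnbhd /=; case: (d == v).
- by exists (inr (Ordinal lt_ik)); rewrite !inE ?in_cnbhd //= !eqxx.
Qed.

Lemma separates_inr_inr i j : i != j -> separates G C (inr i) (inr j).
Proof.
wlog lt_ij : i j / (i < j)%N => [wlog_ij ij|_].
  have [lt_ij|gt_ij|/val_inj eq_ij] := ltngtP i j.
  - exact: wlog_ij.
  - by apply/separates_sym/wlog_ij; rewrite // eq_sym.
  - by rewrite eq_ij eqxx in ij.
case: j lt_ij => -[|[|j]] //= lt_jk; case: i => -[|i] lt_ik //= lt_ij.
- by exists (inr leaf2); rewrite !inE ?in_cnbhd.
- case/orP: D_centre => [vD|k_gt3].
    by exists (inl v); rewrite ?inE ?in_cnbhd //= eqxx.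
  case: j lt_jk lt_ij => [|j] lt_jk _.
    by exists (inr (Ordinal k_gt3)); rewrite !inE ?in_cnbhd.
  by exists (inr leaf2); rewrite !inE ?in_cnbhd.
- exists (inr (Ordinal lt_jk)); rewrite !inE ?in_cnbhd //= !eqxx !orbF.
  by rewrite (inj_eq inr_inj) -val_eqE /= (gtn_eqF lt_ij).
Qed.

Lemma id_code_attach_star : is_id_code G C.
Proof.
apply: is_id_code_sep => [|[x|i] [y|j] neq]; first exact: dominates_star_code.
- by apply: separates_inl_inl; apply: contraNneq neq => ->.
- exact: separates_inl_inr.
- exact/separates_sym/separates_inl_inr.
- by apply: separates_inr_inr; apply: contraNneq neq => ->.
Qed.

End StarCode.
End AttachStar.

Lemma ord_of_all_iota n (P : pred nat) : all P (iota 0 n) -> forall i : 'I_n, P i.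
Proof. by move=> /allP all_P i; apply: all_P; rewrite mem_iota ltn_ord. Qed.

Lemma ord_of_has_iota n (P : pred nat) : has P (iota 0 n) -> exists i : 'I_n, P i.
Proof.
by case/hasP=> i; rewrite mem_iota add0n => lt_in Pi; exists (Ordinal lt_in).
Qed.

Lemma card_ord_in_seq n (s : seq nat) : (#|[set i : 'I_n | val i \in s]| <= size s)%N.
Proof.
rewrite cardE -(size_map val); apply: uniq_leq_size.
  by rewrite (map_inj_uniq val_inj) enum_uniq.
by move=> j /mapP[i]; rewrite mem_enum inE => s_i ->.
Qed.

Definition T2_cnbhd_nat (x d : nat) : bool :=
  [|| d == x, (x, d) \in T2_edges | (d, x) \in T2_edges].

Lemma in_cnbhd_T2 (x d : 'I_7) : (d \in cnbhd T2 x) = T2_cnbhd_nat x d.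
Proof. by rewrite in_cnbhd. Qed.

Definition T2_base_seq (v : nat) : seq nat :=
  match v with
  | 0 => [:: 0; 3; 4; 5]
  | 1 => [:: 1; 2; 5; 6]
  | 2 | 3 => [:: 0; 2; 5; 6]
  | 4 | 5 => [:: 0; 2; 4; 5]
  | _ => [:: 0; 2; 4; 6]
  end.

Definition T2_base (v : 'I_7) : {set 'I_7} := [set d | val d \in T2_base_seq v].

(* Stated over [nat] so that it can be checked by evaluation: cardinalities and
   finite quantifiers are locked and do not compute. *)
Definition T2_base_ok (v : nat) : bool :=
  let D := T2_base_seq v in
  let vs := iota 0 7 in
  let dom x := has (fun d => (d \in D) && T2_cnbhd_nat x d) vs in
  let sep x y :=
    has (fun d => (d \in D) && (T2_cnbhd_nat x d != T2_cnbhd_nat y d)) vs in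
  [&& all dom vs,
      all (fun x => all (fun y => [|| x == y, x == v, y == v | sep x y]) vs) vs,
      size D == 4 & (v \in D) || (v == 3)].

Lemma T2_base_all_ok : all T2_base_ok (iota 0 7).
Proof. by []. Qed.

Lemma dominates_T2_base v : dominates T2 (T2_base v).
Proof.
move=> x; have /and4P[dom _ _ _] := ord_of_all_iota T2_base_all_ok v.
have [d /andP[dD dx]] := ord_of_has_iota (ord_of_all_iota dom x).
by exists d; rewrite ?inE ?in_cnbhd_T2.
Qed.

Lemma separates_T2_base v x y :
  x != v -> y != v -> x != y -> separates T2 (T2_base v) x y.
Proof.
move=> xv yv xy; have /and4P[_ sep _ _] := ord_of_all_iota T2_base_all_ok v.
move: (ord_of_all_iota (ord_of_all_iota sep x) y).
rewrite !val_eqE (negbTE xv) (negbTE yv) (negbTE xy) => /ord_of_has_iota[d].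
by case/andP=> dD dsep; exists d; rewrite ?inE ?in_cnbhd_T2.
Qed.

Lemma card_T2_base v : (#|T2_base v| <= 4)%N.
Proof.
have /and4P[_ _ /eqP size4 _] := ord_of_all_iota T2_base_all_ok v.
by apply: leq_trans (card_ord_in_seq _ _) _; rewrite size4.
Qed.

Lemma mem_T2_base v : (v \in T2_base v) || (val v == 3).
Proof. by have /and4P[_ _ _] := ord_of_all_iota T2_base_all_ok v; rewrite inE. Qed.

Lemma T2_star_iso_T3 v : val v = 3 -> graph_iso (attach_star T2 v 3) T3.
Proof.
move=> v3; have -> : v = Ordinal (isT : 3 < 7) by apply: val_inj.
exists (@unsplit 7 3); split; first exact: Bijective (@unsplitK 7 3) (@splitK 7 3).
by move=> [[[|[|[|[|[|[|[|a]]]]]]] ?]|[[|[|[|a]]] ?]]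
          [[[|[|[|[|[|[|[|b]]]]]]] ?]|[[|[|[|b]]] ?]].
Qed.

Local Open Scope ring_scope.

Lemma ler_nat_ratio (R : numFieldType) (a b d : nat) :
  (0 < d)%N -> (a * d <= (d - 1) * b)%N -> (a%:R : R) <= ((d - 1)%:R / d%:R) * b%:R.
Proof. by move=> d_gt0 le_ab; rewrite mulrAC ler_pdivlMr ?ltr0n // -!natrM ler_nat. Qed.

Theorem mainTheorem10 (v : 'I_7) (DeltaS : nat) :
  (3 <= DeltaS)%N ->
  let G := attach_star T2 v DeltaS in
  let n := #|{: ('I_7 + 'I_DeltaS)%type}| in
  let Delta := max_degree G in
  (3 <= Delta)%N ->
  ~ graph_iso G T3 ->
  ((gammaID G)%:R : rat) <= ((Delta - 1)%:R / Delta%:R) * n%:R.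
Proof.
move=> k_gt2 G n Delta _ not_T3.
have D_centre : (v \in T2_base v) || (3 < DeltaS)%N.
  case/orP: (mem_T2_base v) => [-> //|/eqP v3].
  apply/orP; right; rewrite ltn_neqAle k_gt2 andbT; apply/negP=> /eqP k3.
  by apply: not_T3; rewrite /G -k3; exact: T2_star_iso_T3.
have code := id_code_attach_star k_gt2 (dominates_T2_base v)
  (@separates_T2_base v) D_centre.
have le_gk : (gammaID G <= 4 + DeltaS.-1)%N.
  apply: leq_trans (gammaID_le code) _.
  apply: leq_trans (card_star_code _ (ltnW k_gt2)) _.
  by rewrite leq_add2r card_T2_base.
have le_kDelta : (DeltaS <= Delta)%N :=
  max_degree_attach_star T2 v (ltnW (ltnW k_gt2)).
rewrite /n card_sum !card_ord; apply: ler_nat_ratio; first by lia.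
by apply: leq_trans (leq_mul le_gk (leqnn Delta)) _; nia.
Qed.
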